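(* Let $\alpha(\lambda)=\prod_{k=1}^R(\lambda-\alpha_k)$ be a monic polynomial of degree $R$. Then the separate states associated with $\alpha$ satisfy $$\langle\alpha|=(-1)^{RN}\langle1|\prod_{k=1}^RD(\alpha_k),\qquad |\alpha\rangle=(-1)^{RN}\prod_{k=1}^RD(\alpha_k)|1\rangle,$$ where $\langle1|$ and $|1\rangle$ are the separate states associated with the constant function $1$.
   Context: Fix $N\ge1$, nonzero $\eta\in\mathbb C$ and $\xi_1,\dots,\xi_N\in\mathbb C$ with $\xi_a\neq\xi_b$, $\xi_a\ne\xi_b\pm\eta$ for $a\ne b$. Let $\mathbb V=\bigotimes_{n=1}^NV_n$, $V_n\cong\mathbb C^2$. Let $R(\lambda)$ be the $4\times4$ matrix with rows $(\lambda+\eta,0,0,0),(0,\lambda,\eta,0),(0,\eta,\lambda,0),(0,0,0,\lambda+\eta)$ and $T_0(\lambda)=R_{0N}(\lambda-\xi_N)\cdots R_{01}(\lambda-\xi_1)$ on $V_0\otimes\mathbb V$, written in the auxiliary space $V_0\cong\mathbb C^2$ as the $2\times2$ matrix with entries $A(\lambda),B(\lambda)$ (first row), $C(\lambda),D(\lambda)$ (second row). Put $a(\lambda)=\prod_n(\lambda-\xi_n+\eta)$, $d(\lambda)=\prod_n(\lambda-\xi_n)$. Let $|0\rangle=\bigotimes_n(1,0)^T$ and $\langle0|=\bigotimes_n(1,0)$. For complex numbers $x_1,\dots,x_M$ let $V(x_1,\dots,x_M)=\prod_{1\le b<a\le M}(x_a-x_b)$ and $V(\{\xi\})=V(\xi_1,\dots,\xi_N)$.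 For $\mathbf h\in\{0,1\}^N$ put $|\mathbf h\rangle=V(\{\xi\})^{-1}\prod_n(B(\xi_n)/a(\xi_n))^{h_n}|0\rangle$ and $\langle\mathbf h|=V(\{\xi\})^{-1}\langle0|\prod_n(C(\xi_n)/d(\xi_n-\eta))^{h_n}$. For functions $\alpha,\beta$ on $\mathbb C$ the separate states are $\langle\alpha|=\sum_{\mathbf h\in\{0,1\}^N}\prod_{a=1}^N\alpha(\xi_a-h_a\eta)\,V(\xi_1-h_1\eta,\dots,\xi_N-h_N\eta)\langle\mathbf h|$ and $|\beta\rangle=\sum_{\mathbf h}\prod_{a=1}^N\beta(\xi_a-h_a\eta)\,V(\xi_1+h_1\eta,\dots,\xi_N+h_N\eta)|\mathbf h\rangle$. *)

From mathcomp Require Import all_boot all_algebra.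
From mathcomp Require Export complex reals.
Import GRing.Theory.
Set Implicit Arguments. Unset Strict Implicit. Unset Printing Implicit Defensive.
Local Open Scope ring_scope.

(* Basis of C^2: index 0 <-> (1,0)^T, index 1 <-> (0,1)^T.
   Basis of V = (C^2)^{(x) N}: finite functions s : 'I_N -> 'I_2
   (site n, 0-based, corresponds to V_{n+1} of the paper). *)
Definition i0 : 'I_2 := @Ordinal 2 0 isT.
Definition i1 : 'I_2 := @Ordinal 2 1 isT.

Section XXZ.
Variable C : fieldType.

Definition idx (N : nat) := {ffun 'I_N -> 'I_2}.

Definition op N := idx N -> idx N -> C.
Definition opmul N (X Y : op N) : op N :=
  fun s t => \sum_(u : idx N) X s u * Y u t.
Definition opid N : op N := fun s t => (s == t)%:R.
Definition opscale N (c : C) (X : op N) : op N := fun s t => c * X s t.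
Definition opprod N (l : seq (op N)) : op N := foldr (@opmul N) (@opid N) l.
Definition opapp N (X : op N) (v : idx N -> C) : idx N -> C :=
  fun s => \sum_(t : idx N) X s t * v t.
Definition braapp N (w : idx N -> C) (X : op N) : idx N -> C :=
  fun t => \sum_(s : idx N) w s * X s t.

(* The 4x4 R-matrix, rows/columns indexed by 2a+b for e_a (x) e_b *)
Definition Rmat (eta lam : C) (i j : nat) : C :=
  match i, j with
  | 0, 0 => lam + eta | 0, 1 => 0   | 0, 2 => 0   | 0, 3 => 0
  | 1, 0 => 0   | 1, 1 => lam | 1, 2 => eta | 1, 3 => 0
  | 2, 0 => 0   | 2, 1 => eta | 2, 2 => lam | 2, 3 => 0
  | 3, 0 => 0   | 3, 1 => 0   | 3, 2 => 0   | 3, 3 => lam + eta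
  | _, _ => 0
  end.

(* operators on V_0 (x) V, written as 2x2 matrices (in the auxiliary space)
   of operators on V *)
Definition amat N := 'I_2 -> 'I_2 -> op N.
Definition amul N (X Y : amat N) : amat N :=
  fun a c s t => \sum_(b < 2) opmul (X a b) (Y b c) s t.
Definition aid N : amat N := fun a c => if a == c then @opid N else (fun _ _ => 0).

Definition R0n (eta : C) N (n : 'I_N) (mu : C) : amat N :=
  fun a a' s t =>
    Rmat eta mu (2 * a + s n)%N (2 * a' + t n)%N *
    \prod_(m : 'I_N | m != n) (s m == t m)%:R.

Variables (N : nat) (eta : C) (xi : 'I_N -> C).

(* T_0(lambda) = R_{0N}(lambda - xi_N) ... R_{01}(lambda - xi_1) *)
Definition monodromy (lam : C) : amat N :=
  foldr (@amul N) (@aid N) [seq R0n eta n (lam - xi n) | n <- rev (enum 'I_N)].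

Definition Aop lam := monodromy lam i0 i0.
Definition Bop lam := monodromy lam i0 i1.
Definition Cop lam := monodromy lam i1 i0.
Definition Dop lam := monodromy lam i1 i1.

Definition afun (lam : C) : C := \prod_(n : 'I_N) (lam - xi n + eta).
Definition dfun (lam : C) : C := \prod_(n : 'I_N) (lam - xi n).

Definition ket0 : idx N -> C := fun s => (s == [ffun => i0])%:R.
Definition bra0 : idx N -> C := fun s => (s == [ffun => i0])%:R.

Definition Vand (xs : seq C) : C :=
  \prod_(a < size xs) \prod_(b < size xs | (b < a)%N) (xs`_a - xs`_b).

Definition Vxi : C := Vand [seq xi n | n <- enum 'I_N].

(* |h> and <h| for h in {0,1}^N (h_n = 1 <-> h n = true) *)
Definition keth (h : {ffun 'I_N -> bool}) : idx N -> C :=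
  fun s => (Vxi)^-1 *
    opapp (opprod [seq if h n then opscale (afun (xi n))^-1 (Bop (xi n))
                       else @opid N | n <- enum 'I_N]) ket0 s.
Definition brah (h : {ffun 'I_N -> bool}) : idx N -> C :=
  fun s => (Vxi)^-1 *
    braapp bra0 (opprod [seq if h n then opscale (dfun (xi n - eta))^-1 (Cop (xi n))
                       else @opid N | n <- enum 'I_N]) s.

Definition bra_sep (alpha : C -> C) : idx N -> C :=
  fun s => \sum_(h : {ffun 'I_N -> bool})
    (\prod_(a : 'I_N) alpha (xi a - (h a)%:R * eta)) *
    Vand [seq xi a - (h a)%:R * eta | a <- enum 'I_N] * brah h s.
Definition ket_sep (beta : C -> C) : idx N -> C :=
  fun s => \sum_(h : {ffun 'I_N -> bool})
    (\prod_(a : 'I_N) beta (xi a - (h a)%:R * eta)) *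
    Vand [seq xi a + (h a)%:R * eta | a <- enum 'I_N] * keth h s.

End XXZ.

From mathcomp Require Import all_boot all_algebra.
From mathcomp Require Import complex reals boolp.
From mathcomp Require Import ring.
Import GRing.Theory Num.Theory.
Set Implicit Arguments. Unset Strict Implicit. Unset Printing Implicit Defensive.
Local Open Scope ring_scope.

(* The states <h| and |h> are eigenvectors of D(l), with eigenvalue
   prod_n (l - xi_n + h_n eta).  Indeed D(l) acts on the vacuum by d(l), and the RTT
   relation of the monodromy matrix (a product of R-matrices acting on distinct sites)
   yields the exchange relations of D(l) with B(xi_n) and C(xi_n) on vectors annihilated
   by D(xi_n).  Hence prod_k D(alpha_k) multiplies the h-term of a separate state by
   prod_k prod_n (alpha_k - xi_n + h_n eta) = (-1)^(RN) prod_n alpha(xi_n - h_n eta),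
   the ratio between the coefficients of the separate states of alpha and of 1. *)

Section RTTAlgebra.
Variables (R : comNzRingType) (eta : R) (m : nat).
Local Notation family := (R -> 'I_2 -> 'I_2 -> 'M[R]_m).

(* Entry ((a,b),(c,d)) of R12(l - u) T1(l) T2(u) = T2(u) T1(l) R12(l - u), where
   R(x) = x + eta P and P is the flip of the two auxiliary spaces. *)
Definition rtt_lhs (T : family) l u a b c d :=
  (l - u) *: (T l a c *m T u b d) + eta *: (T l b c *m T u a d).
Definition rtt_rhs (T : family) l u a b c d :=
  (l - u) *: (T u b d *m T l a c) + eta *: (T u b c *m T l a d).
Definition rtt (T : family) :=
  forall l u a b c d, rtt_lhs T l u a b c d = rtt_rhs T l u a b c d.

Definition aux_mul (X Y : family) : family :=
  fun l a c => \sum_(e < 2) X l a e *m Y l e c.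
Definition aux_commute (X Y : family) :=
  forall l u a b c d, X l a b *m Y u c d = Y u c d *m X l a b.

Variables (X Y : family).
Hypothesis XY : aux_commute X Y.

Lemma aux_mulM l u a b c d :
  aux_mul X Y l a c *m aux_mul X Y u b d =
  \sum_(e < 2) \sum_(f < 2) (X l a e *m X u b f) *m (Y l e c *m Y u f d).
Proof.
rewrite /aux_mul mulmx_suml; apply: eq_bigr => e _.
rewrite mulmx_sumr; apply: eq_bigr => f _.
by rewrite !mulmxA -(mulmxA (X l a e)) -XY !mulmxA.
Qed.

Lemma rtt_rhs_aux_mul l u a b c d :
  rtt_rhs (aux_mul X Y) l u a b c d =
  \sum_(e < 2) \sum_(f < 2) (X u b f *m X l a e) *m rtt_rhs Y l u e f c d.
Proof.
rewrite /rtt_rhs !aux_mulM !scaler_sumr -big_split exchange_big /=.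
apply: eq_bigr => e _; rewrite !scaler_sumr -big_split; apply: eq_bigr => f _ /=.
by rewrite mulmxDr !scalemxAr.
Qed.

Lemma rtt_lhs_aux_mul l u a b c d : rtt X ->
  rtt_lhs (aux_mul X Y) l u a b c d =
  \sum_(e < 2) \sum_(f < 2) (X u b f *m X l a e) *m rtt_lhs Y l u e f c d.
Proof.
move=> RX; transitivity (\sum_(e < 2) \sum_(f < 2)
    rtt_rhs X l u a b e f *m (Y l e c *m Y u f d)).
  rewrite /rtt_lhs !aux_mulM !scaler_sumr -big_split; apply: eq_bigr => e _ /=.
  rewrite !scaler_sumr -big_split; apply: eq_bigr => f _ /=.
  by rewrite -RX /rtt_lhs mulmxDl !scalemxAl.
rewrite /rtt_rhs /rtt_lhs.
under eq_bigr => e _ do under eq_bigr => f _ do rewrite mulmxDl -!scalemxAl.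
under [RHS]eq_bigr => e _ do under eq_bigr => f _ do rewrite mulmxDr -!scalemxAr.
under eq_bigr do rewrite big_split.
under [RHS]eq_bigr do rewrite big_split.
by rewrite !big_split /=; congr (_ + _); rewrite exchange_big.
Qed.

Lemma rtt_aux_mul : rtt X -> rtt Y -> rtt (aux_mul X Y).
Proof.
move=> RX RY l u a b c d; rewrite rtt_lhs_aux_mul // rtt_rhs_aux_mul.
by apply: eq_bigr => e _; apply: eq_bigr => f _; rewrite RY.
Qed.

End RTTAlgebra.

Lemma ord2P (k : 'I_2) : k = i0 \/ k = i1.
Proof. by case: k => [[|[|k]] lt_k2] //; [left|right]; apply: val_inj. Qed.

Lemma sum_ord2 (V : nmodType) (F : 'I_2 -> V) : \sum_(k < 2) F k = F i0 + F i1.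
Proof. by rewrite !big_ord_recl big_ord0 addr0; congr (F _ + F _); apply: val_inj. Qed.

Section Operators.
Variables (C : fieldType) (N : nat).
Local Notation I := (idx N).
Local Notation A := 'M[C]_#|I|.

Definition op_mx (X : op C N) : A := \matrix_(i, j) X (enum_val i) (enum_val j).

Lemma op_mxE X s t : op_mx X (enum_rank s) (enum_rank t) = X s t.
Proof. by rewrite mxE !enum_rankK. Qed.

Lemma eq_op_mx (X Y : op C N) : (forall s t, X s t = Y s t) -> op_mx X = op_mx Y.
Proof. by move=> XY; apply/matrixP=> i j; rewrite !mxE XY. Qed.

Lemma sum_idx (F : I -> C) : \sum_(u : I) F u = \sum_(k < #|I|) F (enum_val k).
Proof. exact: (big_enum_val F). Qed.

Lemma op_mxM X Y : op_mx (opmul X Y) = op_mx X *m op_mx Y.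
Proof.
apply/matrixP=> i j; rewrite !mxE /opmul sum_idx.
by apply: eq_bigr => k _; rewrite !mxE.
Qed.

Lemma op_mx1 : op_mx (@opid C N) = 1%:M.
Proof. by apply/matrixP=> i j; rewrite !mxE /opid (inj_eq enum_val_inj). Qed.

Lemma op_mxZ c X : op_mx (opscale c X) = c *: op_mx X.
Proof. by apply/matrixP=> i j; rewrite !mxE. Qed.

Lemma op_mxD (X Y : op C N) : op_mx (fun s t => X s t + Y s t) = op_mx X + op_mx Y.
Proof. by apply/matrixP=> i j; rewrite !mxE. Qed.

Lemma op_mx_sum (J : finType) (F : J -> op C N) :
  op_mx (fun s t => \sum_j F j s t) = \sum_j op_mx (F j).
Proof. by apply/matrixP=> i k; rewrite !mxE summxE; apply: eq_bigr => j _; rewrite mxE. Qed.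

Lemma op_mx0 : op_mx (fun _ _ => 0) = 0.
Proof. by apply/matrixP=> i j; rewrite !mxE. Qed.

Lemma op_mx_prod l : op_mx (opprod l) = foldr (@mulmx C _ _ _) 1%:M (map op_mx l).
Proof. by elim: l => [|X l IH] /=; rewrite ?op_mx1 // op_mxM IH. Qed.

Lemma op_mx_mulmxE (X : op C N) (K : A) s j :
  \sum_(t : I) X s t * K (enum_rank t) j = (op_mx X *m K) (enum_rank s) j.
Proof.
rewrite mxE sum_idx; apply: eq_bigr => k _.
by rewrite enum_valK /op_mx mxE enum_rankK.
Qed.

Lemma mulmx_op_mxE (X : op C N) (K : A) i t :
  \sum_(s : I) K i (enum_rank s) * X s t = (K *m op_mx X) i (enum_rank t).
Proof.
rewrite mxE sum_idx; apply: eq_bigr => k _.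
by rewrite enum_valK /op_mx mxE enum_rankK.
Qed.

Lemma opapp1 (v : I -> C) s : opapp (@opid C N) v s = v s.
Proof.
rewrite /opapp (bigD1 s) //= /opid eqxx mul1r big1 ?addr0 // => t ts.
by rewrite eq_sym (negbTE ts) mul0r.
Qed.

Lemma braapp1 (v : I -> C) t : braapp v (@opid C N) t = v t.
Proof.
rewrite /braapp (bigD1 t) //= /opid eqxx mulr1 big1 ?addr0 // => s st.
by rewrite (negbTE st) mulr0.
Qed.

Lemma opappM (X Y : op C N) v s : opapp (opmul X Y) v s = opapp X (opapp Y v) s.
Proof.
rewrite /opapp /opmul; under eq_bigr do rewrite mulr_suml.
rewrite exchange_big /=; apply: eq_bigr => u _; rewrite mulr_sumr.
by apply: eq_bigr => t _; rewrite mulrA.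
Qed.

Lemma braappM (X Y : op C N) w t : braapp w (opmul X Y) t = braapp (braapp w X) Y t.
Proof.
rewrite /braapp /opmul; under eq_bigr do rewrite mulr_sumr.
rewrite exchange_big /=; apply: eq_bigr => u _; rewrite mulr_suml.
by apply: eq_bigr => s _; rewrite mulrA.
Qed.

Lemma eq_opapp (X : op C N) v v' s : (forall t, v t = v' t) -> opapp X v s = opapp X v' s.
Proof. by move=> vv'; apply: eq_bigr => t _; rewrite vv'. Qed.

Lemma eq_braapp (X : op C N) v v' t : (forall s, v s = v' s) -> braapp v X t = braapp v' X t.
Proof. by move=> vv'; apply: eq_bigr => s _; rewrite vv'. Qed.

Lemma opappZ (X : op C N) c v s : opapp X (fun t => c * v t) s = c * opapp X v s.
Proof. by rewrite /opapp mulr_sumr; apply: eq_bigr => t _; rewrite mulrCA. Qed.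

Lemma braappZ (X : op C N) c v t : braapp (fun s => c * v s) X t = c * braapp v X t.
Proof. by rewrite /braapp mulr_sumr; apply: eq_bigr => s _; rewrite mulrA. Qed.

Lemma opapp_sum (J : finType) (F : J -> I -> C) X t :
  opapp X (fun s => \sum_j F j s) t = \sum_j opapp X (F j) t.
Proof.
rewrite /opapp; under eq_bigr => s _ do rewrite mulr_sumr.
by rewrite exchange_big.
Qed.

Lemma braapp_sum (J : finType) (F : J -> I -> C) X t :
  braapp (fun s => \sum_j F j s) X t = \sum_j braapp (F j) X t.
Proof.
rewrite /braapp; under eq_bigr => s _ do rewrite mulr_suml.
by rewrite exchange_big.
Qed.

Lemma opapp_prod_eigen (T : Type) (X : T -> op C N) (e : T -> C) v (r : seq T) :
  (forall x s, opapp (X x) v s = e x * v s) ->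
  forall s, opapp (opprod (map X r)) v s = (\prod_(x <- r) e x) * v s.
Proof.
move=> Xv; elim: r => [|x r IH] s /=; first by rewrite big_nil mul1r opapp1.
by rewrite opappM (eq_opapp _ _ IH) opappZ Xv big_cons mulrCA mulrA.
Qed.

Lemma braapp_prod_eigen (T : Type) (X : T -> op C N) (e : T -> C) v (r : seq T) :
  (forall x t, braapp v (X x) t = e x * v t) ->
  forall t, braapp v (opprod (map X r)) t = (\prod_(x <- r) e x) * v t.
Proof.
elim: r v => [|x r IH] v vX t /=; first by rewrite big_nil mul1r braapp1.
rewrite braappM (eq_braapp _ _ (vX x)) (IH (fun s => e x * v s)).
  by rewrite big_cons mulrCA mulrA.
by move=> y s; rewrite braappZ vX mulrCA.
Qed.

End Operators.

Section SiteOperators.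
Variables (C : fieldType) (N : nat).
Local Notation I := (idx N).
Local Notation A := 'M[C]_#|I|.

Definition set_site (s : I) (n : 'I_N) (k : 'I_2) : I :=
  [ffun m => if m == n then k else s m].

Lemma set_site_at s n k : set_site s n k n = k.
Proof. by rewrite ffunE eqxx. Qed.

Lemma set_site_other s n k m : m != n -> set_site s n k m = s m.
Proof. by move=> mn; rewrite ffunE (negbTE mn). Qed.

Lemma set_site_set_site s n k j : set_site (set_site s n k) n j = set_site s n j.
Proof. by apply/ffunP=> m; rewrite !ffunE; case: eqP. Qed.

Lemma set_site_comm s n m k j : n != m ->
  set_site (set_site s n k) m j = set_site (set_site s m j) n k.
Proof.
move=> nm; apply/ffunP=> p; rewrite !ffunE.
by case: (eqVneq p m) => [->|//]; rewrite eq_sym (negbTE nm).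
Qed.

Lemma set_site_id s n : set_site s n (s n) = s.
Proof. by apply/ffunP=> m; rewrite ffunE; case: eqP => [->|]. Qed.

Lemma prod_eq_off_site (n : 'I_N) (s t : I) :
  \prod_(m | m != n) ((s m == t m)%:R : C) = (t == set_site s n (t n))%:R.
Proof.
case: (eqVneq t (set_site s n (t n))) => [tE|tNE].
  by rewrite big1 // => m mn; rewrite tE set_site_other // eqxx.
apply/eqP/prodf_eq0; case/boolP: [exists m, (m != n) && (s m != t m)].
  by case/existsP=> m /andP[mn st]; exists m => //; rewrite (negbTE st).
rewrite negb_exists => /forallP st; case/eqP: tNE; apply/ffunP=> m.
rewrite ffunE; case: eqP => [->//|/eqP mn].
by move: (st m); rewrite mn /= negbK => /eqP.
Qed.

Definition site_op n (M : 'M[C]_2) : op C N :=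
  fun s t => M (s n) (t n) * (t == set_site s n (t n))%:R.

Lemma sum_set_site (F : I -> C) s n :
  \sum_(t : I) F t * (t == set_site s n (t n))%:R = \sum_(k < 2) F (set_site s n k).
Proof.
rewrite (partition_big (fun t : I => t n) predT) //=; apply: eq_bigr => k _.
rewrite (bigD1 (set_site s n k)) /= ?set_site_at ?eqxx // mulr1 big1 ?addr0 // => t.
by case/andP=> /eqP tn ne; rewrite tn (negbTE ne) mulr0.
Qed.

Lemma opmul_site_opE n M X s t :
  opmul (site_op n M) X s t = \sum_(k < 2) M (s n) k * X (set_site s n k) t.
Proof.
rewrite /opmul /site_op.
under eq_bigr do rewrite mulrAC.
by rewrite (sum_set_site (fun u => M (s n) (u n) * X u t)); under eq_bigr do rewrite set_site_at.
Qed.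

Lemma site_opM n M M' s t :
  opmul (site_op n M) (site_op n M') s t = site_op n (M *m M') s t.
Proof.
rewrite opmul_site_opE /site_op mxE mulr_suml; apply: eq_bigr => k _.
by rewrite set_site_at set_site_set_site mulrA.
Qed.

Lemma opmul_site_op_neqE n m M M' s t : n != m ->
  opmul (site_op n M) (site_op m M') s t =
  M (s n) (t n) * M' (s m) (t m) * (t == set_site (set_site s n (t n)) m (t m))%:R.
Proof.
move=> nm; have mn : m != n by rewrite eq_sym.
rewrite opmul_site_opE sum_ord2 /site_op !(set_site_other _ _ mn).
have set_site_nE k : set_site (set_site s n k) m (t m) n = k by rewrite set_site_other ?set_site_at.
have t_neq_set_site k : t n != k -> (t == set_site (set_site s n k) m (t m)) = false.
  by move=> tnk; apply: contraNF tnk => /eqP ->; rewrite set_site_nE.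
case: (ord2P (t n)) => tn; rewrite tn.
- by rewrite (t_neq_set_site i1) ?tn // !mulr0 addr0 !mulrA.
- by rewrite (t_neq_set_site i0) ?tn // !mulr0 add0r !mulrA.
Qed.

Lemma site_op_comm n m M M' s t : n != m ->
  opmul (site_op n M) (site_op m M') s t = opmul (site_op m M') (site_op n M) s t.
Proof.
move=> nm; have mn : m != n by rewrite eq_sym.
rewrite !opmul_site_op_neqE // (set_site_comm _ _ _ nm).
by rewrite (mulrC (M' _ _)).
Qed.

Definition site_mx n (M : 'M[C]_2) : A := op_mx (site_op n M).

Lemma site_mxM n M M' : site_mx n (M *m M') = site_mx n M *m site_mx n M'.
Proof. by rewrite /site_mx -op_mxM; apply: eq_op_mx => s t; rewrite site_opM. Qed.

Lemma site_mxD n M M' : site_mx n (M + M') = site_mx n M + site_mx n M'.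
Proof. by rewrite /site_mx -op_mxD; apply: eq_op_mx => s t; rewrite /site_op mxE mulrDl. Qed.

Lemma site_mxZ n c M : site_mx n (c *: M) = c *: site_mx n M.
Proof.
by rewrite /site_mx -op_mxZ; apply: eq_op_mx => s t; rewrite /site_op /opscale mxE mulrA.
Qed.

Lemma site_mx0 n : site_mx n 0 = 0.
Proof. by rewrite -(scale0r 0) site_mxZ scale0r. Qed.

Lemma site_mx_comm n m M M' : n != m ->
  site_mx n M *m site_mx m M' = site_mx m M' *m site_mx n M.
Proof. by move=> nm; rewrite -!op_mxM; apply: eq_op_mx => s t; rewrite site_op_comm. Qed.

Definition site_commute n (Z : A) := forall M, site_mx n M *m Z = Z *m site_mx n M.

Lemma site_commuteD n Z Z' : site_commute n Z -> site_commute n Z' -> site_commute n (Z + Z').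
Proof. by move=> cZ cZ' M; rewrite mulmxDr mulmxDl cZ cZ'. Qed.

Lemma site_commuteM n Z Z' :
  site_commute n Z -> site_commute n Z' -> site_commute n (Z *m Z').
Proof. by move=> cZ cZ' M; rewrite mulmxA cZ -mulmxA cZ' mulmxA. Qed.

Lemma site_commute_scalar n c : site_commute n c%:M.
Proof. by move=> M; rewrite scalar_mxC. Qed.

Lemma site_commute_site_mx n m M : m != n -> site_commute n (site_mx m M).
Proof. by move=> mn M'; rewrite site_mx_comm // eq_sym. Qed.

End SiteOperators.

Section RMatrix.
Variables (C : fieldType) (eta : C).

Definition rmat_block (mu : C) (a b : 'I_2) : 'M[C]_2 :=
  \matrix_(i, j) Rmat eta mu (2 * a + i) (2 * b + j).

Lemma R0n_site_op N (n : 'I_N) mu a b s t :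
  R0n eta n mu a b s t = site_op n (rmat_block mu a b) s t.
Proof. by rewrite /R0n /site_op mxE prod_eq_off_site. Qed.

Lemma rtt_rmat_block x : rtt eta (fun l => rmat_block (l - x)).
Proof.
move=> u v a b c d; rewrite /rtt_lhs /rtt_rhs.
apply/matrixP => i j; rewrite !mxE !sum_ord2 !mxE.
by case: (ord2P a) => ->; case: (ord2P b) => ->; case: (ord2P c) => ->;
  case: (ord2P d) => ->; case: (ord2P i) => ->; case: (ord2P j) => -> /=; ring.
Qed.

Lemma Rmat_affine mu p q :
  Rmat eta mu p q = Rmat eta 0 p q + mu * (Rmat eta 1 p q - Rmat eta 0 p q).
Proof. by do 4?[case: p => [|p]]; do 4?[case: q => [|q]] => /=; ring. Qed.

End RMatrix.

Section PolynomialFunctions.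
Variable R : comNzRingType.

Definition polyfun (f : R -> R) := exists p : {poly R}, forall x, f x = p.[x].

Lemma eq_polyfun f g : (forall x, f x = g x) -> polyfun f -> polyfun g.
Proof. by move=> fg [p fp]; exists p => x; rewrite -fg. Qed.

Lemma polyfun_const c : polyfun (fun _ => c).
Proof. by exists c%:P => x; rewrite hornerC. Qed.

Lemma polyfunX : polyfun id.
Proof. by exists 'X => x; rewrite hornerX. Qed.

Lemma polyfunD f g : polyfun f -> polyfun g -> polyfun (fun x => f x + g x).
Proof. by move=> [p fp] [q gq]; exists (p + q) => x; rewrite hornerD fp gq. Qed.

Lemma polyfunB f g : polyfun f -> polyfun g -> polyfun (fun x => f x - g x).
Proof. by move=> [p fp] [q gq]; exists (p - q) => x; rewrite hornerD hornerN fp gq. Qed.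

Lemma polyfunM f g : polyfun f -> polyfun g -> polyfun (fun x => f x * g x).
Proof. by move=> [p fp] [q gq]; exists (p * q) => x; rewrite hornerM fp gq. Qed.

Lemma polyfun_sum (I : Type) (r : seq I) (F : I -> R -> R) :
  (forall i, polyfun (F i)) -> polyfun (fun x => \sum_(i <- r) F i x).
Proof.
move=> PF; elim: r => [|i r IH].
  by apply: (eq_polyfun _ (polyfun_const 0)) => x; rewrite big_nil.
by apply: (eq_polyfun _ (polyfunD (PF i) IH)) => x; rewrite big_cons.
Qed.

Lemma polyfun_prod (I : Type) (r : seq I) (F : I -> R -> R) :
  (forall i, polyfun (F i)) -> polyfun (fun x => \prod_(i <- r) F i x).
Proof.
move=> PF; elim: r => [|i r IH].
  by apply: (eq_polyfun _ (polyfun_const 1)) => x; rewrite big_nil.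
by apply: (eq_polyfun _ (polyfunM (PF i) IH)) => x; rewrite big_cons.
Qed.

End PolynomialFunctions.

Lemma polyfun_eq0 (R : numDomainType) (f : R -> R) x0 :
  polyfun f -> (forall x, x != x0 -> f x = 0) -> forall x, f x = 0.
Proof.
move=> [p fp] f0; suff p0 : p = 0 by move=> x; rewrite fp p0 horner0.
apply: contraTeq isT => p0.
pose rs := [seq x0 + k.+1%:R | k <- iota 0 (size p)].
have := @max_poly_roots _ p rs p0; rewrite size_map size_iota ltnn; apply.
  apply/allP => y /mapP[k _ ->]; rewrite /root -fp f0 //.
  by rewrite -subr_eq0 addrC addKr pnatr_eq0.
rewrite map_inj_uniq ?iota_uniq // => a b /addrI /eqP.
by rewrite eqr_nat => /eqP [].
Qed.

Lemma mx_polyfun_eq0 (R : numDomainType) m n (F : R -> 'M[R]_(m, n)) x0 :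
  (forall i j, polyfun (fun l => F l i j)) ->
  (forall l, l != x0 -> F l = 0) -> forall l, F l = 0.
Proof.
move=> PF F0 l; apply/matrixP => i j; rewrite mxE.
by apply: (polyfun_eq0 (x0 := x0) (PF i j)) => y y_x0; rewrite F0 // mxE.
Qed.

Section Monodromy.
Variables (C : fieldType) (N : nat) (eta : C) (xi : 'I_N -> C).
Local Notation I := (idx N).
Local Notation A := 'M[C]_#|I|.

Definition lax n l a c : A := site_mx n (rmat_block eta (l - xi n) a c).

Definition partial_monodromy (s : seq 'I_N) l a c : A :=
  op_mx (foldr (@amul C N) (@aid C N) [seq R0n eta n (l - xi n) | n <- s] a c).

Lemma partial_monodromy_nil l a c : partial_monodromy [::] l a c = (a == c)%:R%:M.
Proof.
rewrite /partial_monodromy /= /aid; case: eqP => _; first exact: op_mx1.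
by rewrite op_mx0 raddf0.
Qed.

Lemma partial_monodromy_cons n s l a c :
  partial_monodromy (n :: s) l a c = \sum_(b < 2) lax n l a b *m partial_monodromy s l b c.
Proof.
rewrite /partial_monodromy /= /amul op_mx_sum; apply: eq_bigr => b _.
rewrite /lax /site_mx -op_mxM; apply: eq_op_mx => u v.
by apply: eq_bigr => w _; rewrite R0n_site_op.
Qed.

Lemma rtt_lax n : rtt eta (lax n).
Proof.
move=> l u a b c d; move: (rtt_rmat_block eta (xi n) l u a b c d).
by move/(congr1 (site_mx n)); rewrite !site_mxD !site_mxZ !site_mxM.
Qed.

Lemma site_commute_partial_monodromy n s l a c :
  n \notin s -> site_commute n (partial_monodromy s l a c).
Proof.
elim: s a c => [|m s IH] a c.
  by rewrite partial_monodromy_nil => _; apply: site_commute_scalar.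
rewrite in_cons negb_or => /andP[nm ns]; rewrite partial_monodromy_cons.
rewrite !sum_ord2; apply: site_commuteD; apply: site_commuteM; try exact: IH;
  by apply: site_commute_site_mx; rewrite eq_sym.
Qed.

Lemma rtt_partial_monodromy s : uniq s -> rtt eta (partial_monodromy s).
Proof.
elim: s => [|n s IH] /=.
  move=> _ l u a b c d; rewrite /rtt_lhs /rtt_rhs !partial_monodromy_nil -!scalar_mxM.
  by rewrite [in (_ == d)%:R * _]mulrC.
case/andP=> ns us.
have -> : partial_monodromy (n :: s) = aux_mul (lax n) (partial_monodromy s).
  by apply/funext => l; apply/funext => a; apply/funext => c; rewrite partial_monodromy_cons.
apply: rtt_aux_mul; [|exact: rtt_lax | exact: IH].
by move=> l u a b c d; rewrite /lax (site_commute_partial_monodromy u c d ns).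
Qed.

Lemma polyfun_Rmat x p q : polyfun (fun l => Rmat eta (l - x) p q).
Proof.
apply: (eq_polyfun (fun l => esym (Rmat_affine eta (l - x) p q))).
apply: polyfunD (polyfun_const _) _; apply: polyfunM _ (polyfun_const _).
by apply: polyfunB; [exact: polyfunX | exact: polyfun_const].
Qed.

Lemma polyfun_partial_monodromy s a c i j :
  polyfun (fun l => partial_monodromy s l a c i j).
Proof.
elim: s a c i j => [|n s IH] a c i j.
  apply: (eq_polyfun _ (polyfun_const (partial_monodromy [::] 0 a c i j))) => l.
  by rewrite !partial_monodromy_nil.
apply: (@eq_polyfun _ (fun l => \sum_(b < 2) \sum_k
    lax n l a b i k * partial_monodromy s l b c k j)).
  by move=> l; rewrite partial_monodromy_cons summxE; apply: eq_bigr => b _; rewrite mxE.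
apply: polyfun_sum => b; apply: polyfun_sum => k; apply: polyfunM; last exact: IH.
apply: (@eq_polyfun _ (fun l => Rmat eta (l - xi n) (2 * a + enum_val i n) (2 * b + enum_val k n) *
   (enum_val k == set_site (enum_val i) n (enum_val k n))%:R)).
  by move=> l; rewrite /lax /site_mx /op_mx /site_op !mxE.
exact: polyfunM (polyfun_Rmat _ _ _) (polyfun_const _).
Qed.

Definition spin_up : 'M[C]_2 := \matrix_(i, j) ((i == i0) && (j == i0))%:R.

Definition up_proj (s : seq 'I_N) : A :=
  foldr (@mulmx C _ _ _) 1%:M [seq site_mx n spin_up | n <- s].

Lemma site_commute_up_proj n s : n \notin s -> site_commute n (up_proj s).
Proof.
elim: s => [|m s IH] /=; first by move=> _; apply: site_commute_scalar.
rewrite in_cons negb_or => /andP[nm ns]; apply: site_commuteM; last exact: IH.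
by apply: site_commute_site_mx; rewrite eq_sym.
Qed.

Lemma rmat_block_spin_up mu :
  [/\ rmat_block eta mu i1 i0 *m spin_up = 0,
      rmat_block eta mu i1 i1 *m spin_up = mu *: spin_up,
      spin_up *m rmat_block eta mu i0 i1 = 0 &
      spin_up *m rmat_block eta mu i1 i1 = mu *: spin_up].
Proof.
by split; apply/matrixP => i j; rewrite !mxE sum_ord2 !mxE;
  case: (ord2P i) => ->; case: (ord2P j) => -> /=; ring.
Qed.

(* On spin up each lax operator is triangular: its (1,0) entry kills it and its
   (1,1) entry multiplies it by l - xi n. *)
Lemma partial_monodromy_up_proj s l : uniq s ->
  [/\ partial_monodromy s l i1 i0 *m up_proj s = 0,
      partial_monodromy s l i1 i1 *m up_proj s = (\prod_(m <- s) (l - xi m)) *: up_proj s,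
      up_proj s *m partial_monodromy s l i0 i1 = 0 &
      up_proj s *m partial_monodromy s l i1 i1 = (\prod_(m <- s) (l - xi m)) *: up_proj s].
Proof.
elim: s => [|n s IH] /=.
  move=> _; rewrite !partial_monodromy_nil big_nil scale1r /up_proj /= mulmx1 mul1mx.
  by split; rewrite ?mulmx1 // raddf0.
case/andP=> ns us; have [T10 T11 T01 T11'] := IH us.
set P := site_mx n spin_up; set T := partial_monodromy s l.
have [R10 R11 R01 R11'] := rmat_block_spin_up (l - xi n).
have L10 : lax n l i1 i0 *m P = 0 by rewrite /lax -site_mxM R10 site_mx0.
have L11 : lax n l i1 i1 *m P = (l - xi n) *: P by rewrite /lax -site_mxM R11 site_mxZ.
have L01 : P *m lax n l i0 i1 = 0 by rewrite /lax -site_mxM R01 site_mx0.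
have L11' : P *m lax n l i1 i1 = (l - xi n) *: P by rewrite /lax -site_mxM R11' site_mxZ.
have TP a c : T a c *m P = P *m T a c by rewrite (site_commute_partial_monodromy l a c ns).
have LQ a b : lax n l a b *m up_proj s = up_proj s *m lax n l a b.
  by rewrite /lax (site_commute_up_proj ns).
rewrite /up_proj /= -/(up_proj s) !partial_monodromy_cons !sum_ord2 big_cons -/P -/T.
split.
- rewrite mulmxDl !mulmxA -(mulmxA _ (T i0 i0)) TP mulmxA L10 !mul0mx add0r.
  by rewrite -(mulmxA _ (T i1 i0)) TP -!mulmxA T10 !mulmx0.
- rewrite mulmxDl !mulmxA -(mulmxA _ (T i0 i1)) TP mulmxA L10 !mul0mx add0r.
  rewrite -(mulmxA _ (T i1 i1)) TP mulmxA L11 -!mulmxA T11.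
  by rewrite -scalemxAr -scalemxAl scalerA mulrC.
- rewrite mulmxDr !mulmxA -(mulmxA P (up_proj s)) -LQ mulmxA -(mulmxA _ (up_proj s)).
  by rewrite T01 mulmx0 add0r -(mulmxA P (up_proj s)) -LQ mulmxA L01 !mul0mx.
- rewrite mulmxDr !mulmxA -(mulmxA P (up_proj s)) -LQ mulmxA -(mulmxA _ (up_proj s)).
  rewrite T01 mulmx0 add0r -(mulmxA P (up_proj s)) -LQ mulmxA L11' -mulmxA T11'.
  by rewrite -scalemxAr -scalemxAl scalerA mulrC.
Qed.

Definition vac : I := [ffun => i0].
Definition vac_proj : A := op_mx (fun s t => (s == vac)%:R * (t == vac)%:R).

Lemma vac_projE s t : vac_proj (enum_rank s) (enum_rank t) = (s == vac)%:R * (t == vac)%:R.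
Proof. exact: op_mxE. Qed.

Lemma vac_proj_col t : vac_proj (enum_rank t) (enum_rank vac) = (t == vac)%:R.
Proof. by rewrite vac_projE eqxx mulr1. Qed.

Lemma vac_proj_row t : vac_proj (enum_rank vac) (enum_rank t) = (t == vac)%:R.
Proof. by rewrite vac_projE eqxx mul1r. Qed.

Lemma set_site_vac (s : I) n : (s n == i0) && (set_site s n i0 == vac) = (s == vac).
Proof.
case: (eqVneq (s n) i0) => [<-|sn0] /=; first by rewrite set_site_id.
by apply/esym/eqP => svac; move: sn0; rewrite svac ffunE eqxx.
Qed.

Lemma site_mx_up_vac_proj n : site_mx n spin_up *m vac_proj = vac_proj.
Proof.
rewrite /site_mx /vac_proj -op_mxM; apply: eq_op_mx => s t.
rewrite opmul_site_opE sum_ord2 /spin_up !mxE eqxx -[i1 == i0]/false andbT andbF.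
by rewrite mul0r addr0 mulrA -natrM mulnb set_site_vac.
Qed.

Lemma vac_proj_site_mx_up n : vac_proj *m site_mx n spin_up = vac_proj.
Proof.
rewrite /site_mx /vac_proj -op_mxM; apply: eq_op_mx => s t; rewrite /opmul.
rewrite (bigD1 vac) //= big1 => [|u /negbTE uvac]; last by rewrite uvac mulr0 mul0r.
rewrite eqxx mulr1 addr0 /site_op /spin_up mxE ffunE eqxx /= -natrM mulnb.
case: (eqVneq (t n) i0) => [tn0|tn1] /=.
  by rewrite tn0 (_ : set_site vac n i0 = vac) //; apply/ffunP => m; rewrite !ffunE; case: eqP.
by rewrite (_ : t == vac = false) //; apply: contraNF tn1 => /eqP->; rewrite ffunE.
Qed.

Lemma up_proj_vac_proj s : up_proj s *m vac_proj = vac_proj.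
Proof.
by elim: s => [|n s IH]; rewrite /up_proj /= ?mul1mx // -mulmxA IH site_mx_up_vac_proj.
Qed.

Lemma vac_proj_up_proj s : vac_proj *m up_proj s = vac_proj.
Proof.
by elim: s => [|n s IH]; rewrite /up_proj /= ?mulmx1 // mulmxA vac_proj_site_mx_up IH.
Qed.

Definition Dmx l := partial_monodromy (rev (enum 'I_N)) l i1 i1.
Definition Bmx l := partial_monodromy (rev (enum 'I_N)) l i0 i1.
Definition Cmx l := partial_monodromy (rev (enum 'I_N)) l i1 i0.

Lemma op_mx_Dop l : op_mx (Dop eta xi l) = Dmx l. Proof. by []. Qed.

Lemma uniq_rev_enum : uniq (rev (enum 'I_N)).
Proof. by rewrite rev_uniq enum_uniq. Qed.

Lemma rtt_monodromy : rtt eta (partial_monodromy (rev (enum 'I_N))).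
Proof. exact: rtt_partial_monodromy uniq_rev_enum. Qed.

Lemma prod_rev_enum l : \prod_(m <- rev (enum 'I_N)) (l - xi m) = dfun xi l.
Proof. by rewrite big_rev big_enum. Qed.

Lemma Dmx_vac_proj l : Dmx l *m vac_proj = dfun xi l *: vac_proj.
Proof.
have [_ D_up _ _] := partial_monodromy_up_proj l uniq_rev_enum.
rewrite /Dmx -(up_proj_vac_proj (rev (enum 'I_N))) mulmxA D_up prod_rev_enum.
by rewrite -scalemxAl up_proj_vac_proj.
Qed.

Lemma vac_proj_Dmx l : vac_proj *m Dmx l = dfun xi l *: vac_proj.
Proof.
have [_ _ _ up_D] := partial_monodromy_up_proj l uniq_rev_enum.
rewrite /Dmx -(vac_proj_up_proj (rev (enum 'I_N))) -mulmxA up_D prod_rev_enum.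
by rewrite -scalemxAr vac_proj_up_proj.
Qed.

End Monodromy.

Section Eigenvectors.
Variables (C : numFieldType) (N : nat) (eta : C) (xi : 'I_N -> C).
Local Notation I := (idx N).
Local Notation A := 'M[C]_#|I|.
Local Notation D := (Dmx eta xi).
Local Notation B := (Bmx eta xi).
Local Notation Cm := (Cmx eta xi).

Lemma polyfun_Dmx_mulmx (V : A) i j : polyfun (fun l => (D l *m V) i j).
Proof.
apply: (@eq_polyfun _ (fun l => \sum_k D l i k * V k j)) => [l|]; first by rewrite mxE.
apply: polyfun_sum => k; apply: polyfunM (polyfun_const _).
exact: polyfun_partial_monodromy.
Qed.

Lemma polyfun_mulmx_Dmx (V : A) i j : polyfun (fun l => (V *m D l) i j).
Proof.
apply: (@eq_polyfun _ (fun l => \sum_k V i k * D l k j)) => [l|]; first by rewrite mxE.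
apply: polyfun_sum => k; apply: polyfunM (polyfun_const _) _.
exact: polyfun_partial_monodromy.
Qed.

(* The RTT relation with (a,b,c,d) = (1,0,1,1) reads
   (l - x) D(l) B(x) + eta B(l) D(x) = (l - x + eta) B(x) D(l);
   for x = xi n the term eta B(l) D(x) vanishes on v, and the factor l - x is cancelled
   for l != x, the case l = x following by polynomiality in l.  For C one uses
   (a,b,c,d) = (1,1,1,0) instead. *)
Lemma Dmx_Bmx_eigen (v : A) (dv d' : C -> C) n :
  (forall l, D l *m v = dv l *: v) -> dv (xi n) = 0 -> polyfun d' ->
  (forall l, dv l * (l - xi n + eta) = (l - xi n) * d' l) ->
  forall l, D l *m (B (xi n) *m v) = d' l *: (B (xi n) *m v).
Proof.
move=> Dv dv0 Pd' dv_d' l; apply/eqP; rewrite -subr_eq0; apply/eqP; move: l.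
apply: (mx_polyfun_eq0 (x0 := xi n)) => [i j|l l_xi].
  apply: (@eq_polyfun _ (fun l => (D l *m (B (xi n) *m v)) i j - d' l * (B (xi n) *m v) i j)).
    by move=> l; rewrite !mxE.
  by apply: polyfunB; [exact: polyfun_Dmx_mulmx | exact: polyfunM Pd' (polyfun_const _)].
apply/eqP; rewrite subr_eq0; apply/eqP; apply: (scalerI (a := l - xi n)).
  by rewrite subr_eq0.
have := congr1 (mulmx^~ v) (rtt_monodromy eta xi l (xi n) i1 i0 i1 i1).
rewrite /rtt_lhs /rtt_rhs !mulmxDl -!scalemxAl -!mulmxA -/(D l) -/(B l) -/(B (xi n)).
rewrite -/(D (xi n)) !Dv dv0 scale0r mulmx0 scaler0 addr0 -!scalemxAr => ->.
by rewrite -scalerDl !scalerA -dv_d' mulrC; congr (_ *: _); ring.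
Qed.

Lemma Cmx_Dmx_eigen (v : A) (dv d' : C -> C) n :
  (forall l, v *m D l = dv l *: v) -> dv (xi n) = 0 -> polyfun d' ->
  (forall l, dv l * (l - xi n + eta) = (l - xi n) * d' l) ->
  forall l, (v *m Cm (xi n)) *m D l = d' l *: (v *m Cm (xi n)).
Proof.
move=> vD dv0 Pd' dv_d' l; apply/eqP; rewrite -subr_eq0; apply/eqP; move: l.
apply: (mx_polyfun_eq0 (x0 := xi n)) => [i j|l l_xi].
  apply: (@eq_polyfun _ (fun l => ((v *m Cm (xi n)) *m D l) i j - d' l * (v *m Cm (xi n)) i j)).
    by move=> l; rewrite !mxE.
  by apply: polyfunB; [exact: polyfun_mulmx_Dmx | exact: polyfunM Pd' (polyfun_const _)].
apply/eqP; rewrite subr_eq0; apply/eqP; apply: (scalerI (a := l - xi n)).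
  by rewrite subr_eq0.
have := congr1 (mulmx v) (rtt_monodromy eta xi l (xi n) i1 i1 i1 i0).
rewrite /rtt_lhs /rtt_rhs !mulmxDr -!scalemxAr !mulmxA -/(D l) -/(Cm l) -/(Cm (xi n)).
rewrite -/(D (xi n)) !vD dv0 scale0r mul0mx scaler0 addr0 -!scalemxAl => <-.
by rewrite -scalerDl !scalerA -dv_d' mulrC; congr (_ *: _); ring.
Qed.

Definition D_eigenvalue (s : seq 'I_N) (h : 'I_N -> bool) l :=
  \prod_(m : 'I_N) (l - xi m + ((m \in s) && h m)%:R * eta).

Lemma polyfun_D_eigenvalue s (h : 'I_N -> bool) : polyfun (D_eigenvalue s h).
Proof.
apply: polyfun_prod => m; apply: polyfunD (polyfun_const _).
by apply: polyfunB; [exact: polyfunX | exact: polyfun_const].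
Qed.

Lemma D_eigenvalue_nil (h : 'I_N -> bool) l : D_eigenvalue [::] h l = dfun xi l.
Proof. by apply: eq_bigr => m _; rewrite in_nil mul0r addr0. Qed.

Lemma D_eigenvalue_root s (h : 'I_N -> bool) n : n \notin s -> D_eigenvalue s h (xi n) = 0.
Proof.
move=> ns; apply/eqP/prodf_eq0; exists n => //.
by rewrite (negbTE ns) mul0r addr0 subrr.
Qed.

Lemma D_eigenvalue_cons s (h : 'I_N -> bool) n l : n \notin s -> h n ->
  D_eigenvalue s h l * (l - xi n + eta) = (l - xi n) * D_eigenvalue (n :: s) h l.
Proof.
move=> ns hn; rewrite /D_eigenvalue (bigD1 n) //= [in RHS](bigD1 n) //=.
rewrite in_cons eqxx hn (negbTE ns) /= mul0r addr0 mul1r mulrAC -mulrA.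
by congr (_ * (_ * _)); apply: eq_bigr => m mn; rewrite in_cons (negbTE mn).
Qed.

Lemma D_eigenvalue_cons_idle s (h : 'I_N -> bool) n l : ~~ h n ->
  D_eigenvalue (n :: s) h l = D_eigenvalue s h l.
Proof.
move=> hn; apply: eq_bigr => m _; rewrite in_cons.
by case: (eqVneq m n) => [->|] //=; rewrite (negbTE hn) andbF.
Qed.

Lemma D_eigenvalue_rcons s (h : 'I_N -> bool) n l :
  D_eigenvalue (rcons s n) h l = D_eigenvalue (n :: s) h l.
Proof. by apply: eq_bigr => m _; rewrite mem_rcons. Qed.

(* A ket v is encoded by the matrix v <0|, a bra w by |0> w, both through vac_proj = |0><0|:
   the ket is the column of ket_mx at the vacuum, the bra the row of bra_mx. *)
Definition ket_mx (h : 'I_N -> bool) (c : 'I_N -> C) (s : seq 'I_N) : A :=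
  foldr (@mulmx C _ _ _) 1%:M
    [seq if h n then c n *: B (xi n) else 1%:M | n <- s] *m @vac_proj C N.

Definition bra_mx (h : 'I_N -> bool) (c : 'I_N -> C) (s : seq 'I_N) : A :=
  @vac_proj C N *m foldr (@mulmx C _ _ _) 1%:M
    [seq if h n then c n *: Cm (xi n) else 1%:M | n <- s].

Lemma Dmx_ket_mx (h : 'I_N -> bool) (c : 'I_N -> C) s : uniq s ->
  forall l, D l *m ket_mx h c s = D_eigenvalue s h l *: ket_mx h c s.
Proof.
elim: s => [|n s IH] /=.
  by move=> _ l; rewrite /ket_mx /= mul1mx Dmx_vac_proj D_eigenvalue_nil.
case/andP=> ns us l.
have -> : ket_mx h c (n :: s) = (if h n then c n *: B (xi n) else 1%:M) *m ket_mx h c s.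
  by rewrite /ket_mx /= mulmxA.
case: (boolP (h n)) => hn; last by rewrite !mul1mx IH // D_eigenvalue_cons_idle.
rewrite -!scalemxAl -scalemxAr scalerA mulrC -scalerA; congr (_ *: _).
apply: (Dmx_Bmx_eigen (dv := D_eigenvalue s h)) => //.
- exact: IH.
- exact: D_eigenvalue_root.
- exact: polyfun_D_eigenvalue.
- by move=> l'; apply: D_eigenvalue_cons.
Qed.

Lemma bra_mx_Dmx (h : 'I_N -> bool) (c : 'I_N -> C) s : uniq s ->
  forall l, bra_mx h c s *m D l = D_eigenvalue s h l *: bra_mx h c s.
Proof.
elim/last_ind: s => [|s n IH].
  by move=> _ l; rewrite /bra_mx /= mulmx1 vac_proj_Dmx D_eigenvalue_nil.
rewrite rcons_uniq => /andP[ns us] l.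
have -> : bra_mx h c (rcons s n) = bra_mx h c s *m (if h n then c n *: Cm (xi n) else 1%:M).
  rewrite /bra_mx map_rcons -mulmxA; congr (_ *m _).
  by elim: (map _ s) => [|X r IHr] /=; rewrite ?mulmx1 ?mul1mx // IHr mulmxA.
rewrite D_eigenvalue_rcons.
case: (boolP (h n)) => hn; last by rewrite !mulmx1 IH // D_eigenvalue_cons_idle.
rewrite -!scalemxAr -scalemxAl scalerA mulrC -scalerA; congr (_ *: _).
apply: (Cmx_Dmx_eigen (dv := D_eigenvalue s h)) => //.
- exact: IH.
- exact: D_eigenvalue_root.
- exact: polyfun_D_eigenvalue.
- by move=> l'; apply: D_eigenvalue_cons.
Qed.

Lemma keth_ket_mx (h : {ffun 'I_N -> bool}) s :
  keth eta xi h s = (Vxi xi)^-1 *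
    ket_mx h (fun n => (afun eta xi (xi n))^-1) (enum 'I_N) (enum_rank s) (enum_rank (vac N)).
Proof.
rewrite /keth /ket_mx /opapp /ket0; congr (_ * _).
under eq_bigr do rewrite -vac_proj_col.
rewrite op_mx_mulmxE op_mx_prod -map_comp; congr ((foldr _ _ _ *m _) _ _).
by apply: eq_map => n /=; case: (h n); rewrite ?op_mxZ ?op_mx1.
Qed.

Lemma brah_bra_mx (h : {ffun 'I_N -> bool}) t :
  brah eta xi h t = (Vxi xi)^-1 *
    bra_mx h (fun n => (dfun xi (xi n - eta))^-1) (enum 'I_N) (enum_rank (vac N)) (enum_rank t).
Proof.
rewrite /brah /bra_mx /braapp /bra0; congr (_ * _).
under eq_bigr do rewrite -vac_proj_row.
rewrite mulmx_op_mxE op_mx_prod -map_comp; congr ((_ *m foldr _ _ _) _ _).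
by apply: eq_map => n /=; case: (h n); rewrite ?op_mxZ ?op_mx1.
Qed.

Lemma Dop_keth (h : {ffun 'I_N -> bool}) l s :
  opapp (Dop eta xi l) (keth eta xi h) s = D_eigenvalue (enum 'I_N) h l * keth eta xi h s.
Proof.
rewrite /opapp; under eq_bigr do rewrite keth_ket_mx mulrCA.
rewrite -mulr_sumr op_mx_mulmxE op_mx_Dop Dmx_ket_mx ?enum_uniq // mxE keth_ket_mx.
by rewrite mulrCA.
Qed.

Lemma brah_Dop (h : {ffun 'I_N -> bool}) l t :
  braapp (brah eta xi h) (Dop eta xi l) t = D_eigenvalue (enum 'I_N) h l * brah eta xi h t.
Proof.
rewrite /braapp; under eq_bigr do rewrite brah_bra_mx -mulrA.
rewrite -mulr_sumr mulmx_op_mxE op_mx_Dop bra_mx_Dmx ?enum_uniq // mxE brah_bra_mx.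
by rewrite mulrCA.
Qed.

End Eigenvectors.

Section SeparateStates.
Variables (C : numFieldType) (N : nat) (eta : C) (xi : 'I_N -> C).
Variables (Rd : nat) (alphas : 'I_Rd -> C).
Local Notation alpha := (fun lam => \prod_(k < Rd) (lam - alphas k)).
Local Notation Dprod := (opprod [seq Dop eta xi (alphas k) | k <- enum 'I_Rd]).

Lemma prod_alpha_D_eigenvalue (h : {ffun 'I_N -> bool}) :
  \prod_(a : 'I_N) alpha (xi a - (h a)%:R * eta) =
  (-1) ^+ (Rd * N) * \prod_(k < Rd) D_eigenvalue eta xi (enum 'I_N) h (alphas k).
Proof.
have D_eigenE k : D_eigenvalue eta xi (enum 'I_N) h (alphas k) =
    (-1) ^+ N * \prod_(a : 'I_N) (xi a - (h a)%:R * eta - alphas k).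
  rewrite -[X in (-1) ^+ X](card_ord N) -prodrN; apply: eq_bigr => m _.
  by rewrite mem_enum /=; ring.
rewrite (eq_bigr _ (fun k _ => D_eigenE k)) big_split /= prodr_const card_ord.
rewrite -exprM mulnC mulrA -exprMn mulrNN mulr1 expr1n mul1r.
by rewrite exchange_big.
Qed.

Lemma bra_sep_monic :
  bra_sep eta xi alpha =
  (fun s => (-1) ^+ (Rd * N) * braapp (bra_sep eta xi (fun _ => 1)) Dprod s).
Proof.
apply/funext => t; rewrite /bra_sep braapp_sum mulr_sumr; apply: eq_bigr => h _.
rewrite big1_eq; under [in RHS]eq_braapp do rewrite mul1r.
rewrite braappZ (braapp_prod_eigen (e := fun k => D_eigenvalue eta xi (enum 'I_N) h (alphas k))).
  by rewrite big_enum prod_alpha_D_eigenvalue /=; ring.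
by move=> k t'; rewrite brah_Dop.
Qed.

Lemma ket_sep_monic :
  ket_sep eta xi alpha =
  (fun s => (-1) ^+ (Rd * N) * opapp Dprod (ket_sep eta xi (fun _ => 1)) s).
Proof.
apply/funext => t; rewrite /ket_sep opapp_sum mulr_sumr; apply: eq_bigr => h _.
rewrite big1_eq; under [in RHS]eq_opapp do rewrite mul1r.
rewrite opappZ (opapp_prod_eigen (e := fun k => D_eigenvalue eta xi (enum 'I_N) h (alphas k))).
  by rewrite big_enum prod_alpha_D_eigenvalue /=; ring.
by move=> k t'; rewrite Dop_keth.
Qed.

End SeparateStates.

Theorem proposition1 (R : realType) (N : nat) (eta : R[i]) (xi : 'I_N -> R[i])
    (Rdeg : nat) (alphas : 'I_Rdeg -> R[i]) :
  (0 < N)%N ->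
  eta != 0 ->
  (forall a b : 'I_N, a != b ->
     [/\ xi a != xi b, xi a != xi b + eta & xi a != xi b - eta]) ->
  let alpha := fun lam : R[i] => \prod_(k < Rdeg) (lam - alphas k) in
  let Dprod := opprod [seq Dop eta xi (alphas k) | k <- enum 'I_Rdeg] in
  bra_sep eta xi alpha
    = (fun s => (-1) ^+ (Rdeg * N) * braapp (bra_sep eta xi (fun _ => 1)) Dprod s)
  /\
  ket_sep eta xi alpha
    = (fun s => (-1) ^+ (Rdeg * N) * opapp Dprod (ket_sep eta xi (fun _ => 1)) s).
Proof. by move=> _ _ _ alpha Dprod; split; [exact: bra_sep_monic | exact: ket_sep_monic]. Qed.
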